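(* Let $u$ be a recurrent aperiodic infinite word over a finite ordered alphabet, and let $w$ and $v$ be factors of $u$. Then it is impossible that simultaneously there exist $k,l\ge 0$ such that $T^k(u)$ is the lexicographically maximal element among the infinite words in the shift orbit closure of $u$ that start with $w$, and $T^l(u)$ is the lexicographically minimal element among the infinite words in the shift orbit closure of $u$ that start with $v$.
   Context: For an infinite word $u=u[0]u[1]\cdots$, $T^n u=u[n]u[n+1]\cdots$ is its $n$-th shift; the shift orbit closure of $u$ is the closure (in the product topology) of $\{T^n u: n\ge 0\}$. Words are compared lexicographically ($0<1<\dots<q-1$; $x<y$ if they agree up to some position and at the first differing position $x$ has the smaller letter). A word is recurrent if every factor occurs infinitely often; aperiodic means not ultimately periodic. *)

From mathcomp Require Import all_boot.
Set Implicit Arguments. Unset Strict Implicit. Unset Printing Implicit Defensive.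

Definition word (q : nat) := nat -> 'I_q.

Definition shift q (n : nat) (u : word q) : word q := fun i => u (n + i).

(* x belongs to the shift orbit closure of u (product topology):
   every prefix of x is a prefix of some shift of u. *)
Definition in_orbit_closure q (u x : word q) : Prop :=
  forall N, exists n, forall i, i < N -> x i = u (n + i).

Definition lex_lt q (x y : word q) : Prop :=
  exists m, (forall i, i < m -> x i = y i) /\ (x m < y m)%N.

Definition word_eq q (x y : word q) : Prop := forall i, x i = y i.

Definition starts_with q (x : word q) (w : seq 'I_q) : Prop :=
  [seq x i | i <- iota 0 (size w)] = w.

Definition factor_of q (w : seq 'I_q) (u : word q) : Prop :=
  exists n, starts_with (shift n u) w.

Definition recurrent q (u : word q) : Prop :=
  forall w, factor_of w u ->
    forall M, exists n, M <= n /\ starts_with (shift n u) w.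

Definition ultimately_periodic q (u : word q) : Prop :=
  exists p N, 0 < p /\ forall i, N <= i -> u (i + p) = u i.

Definition aperiodic q (u : word q) : Prop := ~ ultimately_periodic u.

Definition is_max_starting q (u : word q) (w : seq 'I_q) (y : word q) : Prop :=
  in_orbit_closure u y /\ starts_with y w /\
  forall x, in_orbit_closure u x -> starts_with x w -> word_eq x y \/ lex_lt x y.

Definition is_min_starting q (u : word q) (w : seq 'I_q) (y : word q) : Prop :=
  in_orbit_closure u y /\ starts_with y w /\
  forall x, in_orbit_closure u x -> starts_with x w -> word_eq x y \/ lex_lt y x.

From mathcomp Require Import all_boot.
From mathcomp Require Import zify.

Set Implicit Arguments.
Unset Strict Implicit.
Unset Printing Implicit Defensive.

(* By recurrence, [T^n u] agrees with [u] on a long prefix for some [n > 0].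
   Beyond the prefix [w] of [T^k u], maximality forces [T^(n+k) u] to be
   equal to [T^k u] (impossible, since [u] is aperiodic) or smaller; as
   [T^n u] and [u] share their first [k] letters, [T^n u < u].  Symmetrically
   minimality at [T^l u] gives [u < T^n u], and the lexicographic order is
   asymmetric. *)

Section Words.

Variable q : nat.
Implicit Types (x y u : word q) (w : seq 'I_q).

Lemma starts_with_agree x y w :
  (forall i, i < size w -> x i = y i) -> starts_with x w -> starts_with y w.
Proof.
move=> Exy; rewrite /starts_with => <-; rewrite size_map size_iota.
by apply/eq_in_map => i; rewrite mem_iota add0n => /Exy.
Qed.

Lemma starts_with_prefix x y N :
  starts_with x [seq y i | i <- iota 0 N] -> forall i, i < N -> x i = y i.
Proof.
rewrite /starts_with size_map size_iota => E i ltiN.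
have := congr1 (fun s => nth (x 0) s i) E => /=.
by rewrite !(nth_map 0) ?size_iota // nth_iota.
Qed.

Lemma in_orbit_closure_refl u : in_orbit_closure u u.
Proof. by move=> N; exists 0. Qed.

Lemma in_orbit_closure_shift u x k :
  in_orbit_closure u x -> in_orbit_closure u (shift k x).
Proof.
move=> ux N; have [n En] := ux (k + N).
by exists (n + k) => i ltiN; rewrite /shift En ?addnA //; lia.
Qed.

Lemma recurrent_return u N :
  recurrent u -> exists2 n, 0 < n & forall i, i < N -> u (n + i) = u i.
Proof.
move=> rec_u; have pre_u : factor_of [seq u i | i <- iota 0 N] u.
  by exists 0; rewrite /starts_with size_map size_iota.
have [n [n_gt0 Sn]] := rec_u _ pre_u 1.
by exists n => //; apply: starts_with_prefix Sn.
Qed.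

Lemma lex_lt_asym x y : lex_lt x y -> ~ lex_lt y x.
Proof.
move=> [m [Exy ltm]] [m' [Eyx ltm']].
case: (ltngtP m m') => [/Eyx E|/Exy E|eqm].
- by rewrite E ltnn in ltm.
- by rewrite E ltnn in ltm'.
- by rewrite eqm ltnNge ltnW in ltm.
Qed.

Lemma lex_lt_shift x y k :
  (forall i, i < k -> x i = y i) -> lex_lt (shift k x) (shift k y) -> lex_lt x y.
Proof.
move=> Exy [m [Em ltm]]; exists (k + m); split=> // i ltikm.
case: (ltnP i k) => [/Exy // | leki].
by have := Em (i - k) ltac:(lia); rewrite /shift subnKC.
Qed.

Lemma shift_word_eq_periodic u n k :
  0 < n -> word_eq (shift k (shift n u)) (shift k u) -> ultimately_periodic u.
Proof.
move=> n_gt0 E; exists n, k; split=> // i leki.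
by have := E (i - k); rewrite /shift subnKC // addnC.
Qed.

Section Return.

Variables (u : word q) (n : nat).
Hypotheses (aper_u : aperiodic u) (n_gt0 : 0 < n).

Lemma max_starting_return w k :
  is_max_starting u w (shift k u) ->
  (forall i, i < k + size w -> u (n + i) = u i) -> lex_lt (shift n u) u.
Proof.
move=> [_ [Sw maxw]] En.
have Sw' : starts_with (shift k (shift n u)) w.
  by apply: starts_with_agree Sw => i ltiw; rewrite /shift En //; lia.
have Cn : in_orbit_closure u (shift k (shift n u)).
  exact/in_orbit_closure_shift/in_orbit_closure_shift/in_orbit_closure_refl.
case: (maxw _ Cn Sw') => [E|].
  by case: aper_u; exact: shift_word_eq_periodic n_gt0 E.
by apply: lex_lt_shift => i ltik; rewrite /shift En //; lia.
Qed.

Lemma min_starting_return v l :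
  is_min_starting u v (shift l u) ->
  (forall i, i < l + size v -> u (n + i) = u i) -> lex_lt u (shift n u).
Proof.
move=> [_ [Sv minv]] En.
have Sv' : starts_with (shift l (shift n u)) v.
  by apply: starts_with_agree Sv => i ltiv; rewrite /shift En //; lia.
have Cn : in_orbit_closure u (shift l (shift n u)).
  exact/in_orbit_closure_shift/in_orbit_closure_shift/in_orbit_closure_refl.
case: (minv _ Cn Sv') => [E|].
  by case: aper_u; exact: shift_word_eq_periodic n_gt0 E.
by apply: lex_lt_shift => i ltil; rewrite /shift En //; lia.
Qed.

End Return.

End Words.

Theorem mainTheorem2 (q : nat) (u : word q) (w v : seq 'I_q) :
  recurrent u -> aperiodic u -> factor_of w u -> factor_of v u ->
  ~ ((exists k, is_max_starting u w (shift k u)) /\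
     (exists l, is_min_starting u v (shift l u))).
Proof.
move=> rec_u aper_u _ _ [[k maxw] [l minv]].
have [n n_gt0 En] := recurrent_return (k + size w + (l + size v)) rec_u.
apply: (@lex_lt_asym _ (shift n u) u).
- by apply: (max_starting_return aper_u n_gt0 maxw) => i lti; apply: En; lia.
- by apply: (min_starting_return aper_u n_gt0 minv) => i lti; apply: En; lia.
Qed.
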